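(* Let $d,n\ge1$ and $x_0,x_1,\dots,x_n\in\mathbb{R}^d$. Let $M^*$ be the solution (minimizer) of $$\min_M \tfrac12\|M\|^2 \quad\text{subject to}\quad (x_i-x_0)^T M (x_i-x_0)\ge 2\ \ \forall i\in\{1,\dots,n\},$$ where $M$ ranges over real $d\times d$ matrices. Then $M^*$ is also the solution of $$\min_M \tfrac12\|M\|^2 \quad\text{subject to}\quad (x_i-x_0)^T M (x_i-x_0)\ge 2\ \ \forall i\in\{1,\dots,n\},\quad M\succeq 0.$$
   Context: $\|M\|$ is the Frobenius norm, $\|M\|^2=\sum_{ij}M_{ij}^2$. $M\succeq 0$ means $M$ is a symmetric positive semidefinite matrix. *)

From HB Require Import structures.
From mathcomp Require Import all_boot all_order all_algebra.
From mathcomp Require Import reals.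
Set Implicit Arguments. Unset Strict Implicit. Unset Printing Implicit Defensive.
Import Order.TTheory GRing.Theory Num.Theory.
Local Open Scope ring_scope.

Definition frob2 (R : realType) (d : nat) (M : 'M[R]_d) : R :=
  \sum_(i < d) \sum_(j < d) M i j ^+ 2.

Definition obj (R : realType) (d : nat) (M : 'M[R]_d) : R := frob2 M / 2.

Definition qform (R : realType) (d : nat) (M : 'M[R]_d) (v : 'cV[R]_d) : R :=
  (v^T *m M *m v) 0 0.

Definition psd (R : realType) (d : nat) (M : 'M[R]_d) : Prop :=
  M^T = M /\ forall v : 'cV[R]_d, 0 <= qform M v.

Definition feas1 (R : realType) (d n : nat) (x0 : 'cV[R]_d) (x : 'I_n -> 'cV[R]_d)
  (M : 'M[R]_d) : Prop :=
  forall i : 'I_n, 2 <= qform M (x i - x0).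

Definition feas2 (R : realType) (d n : nat) (x0 : 'cV[R]_d) (x : 'I_n -> 'cV[R]_d)
  (M : 'M[R]_d) : Prop :=
  feas1 x0 x M /\ psd M.

Definition is_minimizer (R : realType) (d : nat) (F : 'M[R]_d -> Prop) (M : 'M[R]_d) : Prop :=
  F M /\ forall N : 'M[R]_d, F N -> obj M <= obj N.

(* If [M] minimizes [||M||^2 / 2] over a set that is closed under [M + t A]
   (t > 0), then the directional derivative [<M, A>] is nonnegative.  The
   constraints are only lower bounds on quadratic forms, so every [A] with a
   nonnegative quadratic form is such a direction.  Taking [A = v v^T] gives
   [v^T M v = <M, v v^T> >= 0]; taking [A = M^T - M], whose quadratic form
   vanishes, gives [0 <= <M, M^T - M> = -||M^T - M||^2 / 2], so [M] is
   symmetric. *)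
From HB Require Import structures.
From mathcomp Require Import all_boot all_order all_algebra.
From mathcomp Require Import reals.
From mathcomp Require Import ring lra.
Set Implicit Arguments. Unset Strict Implicit.
Import Order.TTheory GRing.Theory Num.Theory.
Local Open Scope ring_scope.

Definition frob_ip (R : realType) (d : nat) (M A : 'M[R]_d) : R :=
  \sum_(i < d) \sum_(j < d) M i j * A i j.

Section Frobenius.
Variables (R : realType) (d : nat).
Implicit Types (M A : 'M[R]_d) (v w : 'cV[R]_d).

Lemma frob2_ge0 M : 0 <= frob2 M.
Proof. by apply: sumr_ge0 => i _; apply: sumr_ge0 => j _; exact: sqr_ge0. Qed.

Lemma frob2_eq0 M : frob2 M = 0 -> M = 0.
Proof.
move=> M0; apply/matrixP => i j; rewrite mxE.
have row0 : \sum_(l < d) M i l ^+ 2 = 0.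
  by apply: (psumr_eq0P _ M0) => // k _; apply: sumr_ge0 => l _; exact: sqr_ge0.
have /eqP : M i j ^+ 2 = 0.
  by apply: (psumr_eq0P _ row0) => // l _; exact: sqr_ge0.
by rewrite sqrf_eq0 => /eqP.
Qed.

Lemma frob2_tr M : frob2 M^T = frob2 M.
Proof.
by rewrite /frob2 exchange_big; apply: eq_bigr => i _; apply: eq_bigr => j _; rewrite mxE.
Qed.

Lemma frob2_addZ M A t :
  frob2 (M + t *: A) = frob2 M + 2 * t * frob_ip M A + t ^+ 2 * frob2 A.
Proof.
rewrite /frob2 /frob_ip !mulr_sumr -!big_split /=; apply: eq_bigr => i _.
rewrite !mulr_sumr -!big_split /=; apply: eq_bigr => j _.
by rewrite !mxE; ring.
Qed.

Lemma qformDZ M A t v : qform (M + t *: A) v = qform M v + t * qform A v.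
Proof. by rewrite /qform mulmxDr mulmxDl -scalemxAr -scalemxAl !mxE. Qed.

Lemma qform_tr M v : qform M^T v = qform M v.
Proof.
rewrite /qform -[in RHS](trmxK (_ *m v)) [in RHS]mxE.
by rewrite !trmx_mul trmxK mulmxA.
Qed.

Lemma qform_trB M v : qform (M^T - M) v = 0.
Proof. by rewrite -scaleN1r qformDZ qform_tr mulN1r subrr. Qed.

Lemma qform_outer v w : qform (v *m v^T) w = ((w^T *m v) 0 0) ^+ 2.
Proof.
rewrite /qform !mulmxA -(mulmxA _ v^T) mxE big_ord1 expr2.
by congr (_ * _); rewrite -[w in v^T *m w]trmxK -trmx_mul mxE.
Qed.

Lemma frob_ip_outer M v : frob_ip M (v *m v^T) = qform M v.
Proof.
rewrite /frob_ip /qform mxE.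
under [RHS]eq_bigr => j _ do rewrite mxE mulr_suml.
rewrite exchange_big; apply: eq_bigr => i _; apply: eq_bigr => j _.
by rewrite !mxE big_ord1 !mxE; ring.
Qed.

Lemma frob_ip_trB M : 2 * frob_ip M (M^T - M) = - frob2 (M^T - M).
Proof.
have := frob2_addZ M (M^T - M) 1.
by rewrite scale1r addrC subrK frob2_tr; lra.
Qed.

End Frobenius.

Lemma ge0_of_quadratic_ge0 (R : realFieldType) (b c : R) :
  (forall t, 0 < t -> 0 <= 2 * t * b + t ^+ 2 * c) -> 0 <= b.
Proof.
move=> H; rewrite leNgt; apply/negP => b0.
have c0 : 0 <= c by have := H 1 ltr01; lra.
(* [t = -b / (c + 1)] makes [2 t b + t^2 c = t b (2 - c / (c + 1))] negative. *)
have tp : 0 < - b / (c + 1) by rewrite divr_gt0 // ?oppr_gt0 //; lra.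
have := H _ tp; set t := - b / (c + 1).
have e : t * (c + 1) = - b by rewrite /t divfK //; apply/lt0r_neq0; lra.
nra.
Qed.

Lemma minimizer_frob_ip_ge0 (R : realType) (d : nat) (F : 'M[R]_d -> Prop)
    (M A : 'M[R]_d) :
  is_minimizer F M -> (forall t, 0 < t -> F (M + t *: A)) -> 0 <= frob_ip M A.
Proof.
move=> [_ minM] FA; apply: (@ge0_of_quadratic_ge0 _ _ (frob2 A)) => t t0.
have := minM _ (FA t t0); rewrite /obj frob2_addZ; lra.
Qed.

Lemma feas1_addZ (R : realType) (d n : nat) (x0 : 'cV[R]_d) (x : 'I_n -> 'cV[R]_d)
    (M A : 'M[R]_d) t :
  feas1 x0 x M -> (forall v, 0 <= qform A v) -> 0 <= t -> feas1 x0 x (M + t *: A).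
Proof.
move=> fM A0 t0 i; rewrite qformDZ.
by have := fM i; have := A0 (x i - x0); nra.
Qed.

Lemma feas1_minimizer_psd (R : realType) (d n : nat) (x0 : 'cV[R]_d)
    (x : 'I_n -> 'cV[R]_d) (M : 'M[R]_d) :
  is_minimizer (feas1 x0 x) M -> psd M.
Proof.
move=> minM.
have ip_ge0 A : (forall v, 0 <= qform A v) -> 0 <= frob_ip M A.
  move=> A0; apply: (minimizer_frob_ip_ge0 minM) => t /ltW t0.
  exact: feas1_addZ minM.1 A0 t0.
split.
  apply/eqP; rewrite -subr_eq0; apply/eqP/frob2_eq0.
  have : 0 <= frob_ip M (M^T - M) by apply: ip_ge0 => v; rewrite qform_trB.
  have := frob_ip_trB M; have := frob2_ge0 (M^T - M).
  by move: (frob_ip _ _) (frob2 _) => p f; lra.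
move=> v; rewrite -frob_ip_outer; apply: ip_ge0 => w.
by rewrite qform_outer sqr_ge0.
Qed.

Theorem theorem2 (R : realType) (d n : nat) (hd : (1 <= d)%N) (hn : (1 <= n)%N)
  (x0 : 'cV[R]_d) (x : 'I_n -> 'cV[R]_d) (Mstar : 'M[R]_d) :
  is_minimizer (feas1 x0 x) Mstar ->
  is_minimizer (feas2 x0 x) Mstar.
Proof.
move=> minM; split; first by split; [exact: minM.1 | exact: feas1_minimizer_psd minM].
by move=> N [fN _]; exact: minM.2.
Qed.
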